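(* Let $\mathcal{A}\subseteq\mathcal{B}$ be sub-$\sigma$-algebras of a complete probability space $(\Omega,\mathcal{F},P)$. If $x:L_\infty(\mathcal{B})\to L_\infty(\mathcal{A})$ is a weak $\mathcal{A}$-homogeneous monotone linear operator that is continuous from above, then $x$ is $\mathcal{A}$-homogeneous.
   Context: Weak $\mathcal{A}$-homogeneous: $x(1_AX)=1_Ax(X)$ for all $A\in\mathcal{A}$, $X\in L_\infty(\mathcal{B})$. $\mathcal{A}$-homogeneous: $x(fX)=fx(X)$ for all $f\in L^+_\infty(\mathcal{A})$. Continuous from above: for every nonincreasing sequence $X_n$ with a.s. limit $X$, $x(X_n)\downarrow x(X)$ a.s. *)

From HB Require Import structures.
From mathcomp Require Import all_boot all_order all_algebra.
From mathcomp Require Import all_classical all_reals all_analysis.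
Set Implicit Arguments. Unset Strict Implicit. Unset Printing Implicit Defensive.
Import Order.TTheory GRing.Theory Num.Theory.
Import numFieldNormedType.Exports.
Local Open Scope classical_set_scope.
Local Open Scope ring_scope.

Section Linf.
Context (d : measure_display) (T : measurableType d) (R : realType).

Definition is_sub_sigma (G : set (set T)) : Prop :=
  sigma_algebra setT G /\ (forall A, G A -> measurable A).

Definition measurable_wrt (G : set (set T)) (f : T -> R) : Prop :=
  forall B : set R, measurable B -> G (f @^-1` B).

(* representatives of elements of L_infty(G) (w.r.t. P-a.s. equality) *)
Definition Linf (P : probability T R) (G : set (set T)) (f : T -> R) : Prop :=
  measurable_wrt G f /\ exists M : R, {ae P, forall w, `|f w| <= M}.

Definition Linf_pos (P : probability T R) (G : set (set T)) (f : T -> R) : Prop :=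
  Linf P G f /\ {ae P, forall w, 0 <= f w}.

Definition ind (A : set T) : T -> R := fun w => (\1_A w : R).

End Linf.

From HB Require Import structures.
From mathcomp Require Import all_boot all_order all_algebra.
From mathcomp Require Import all_classical all_reals all_analysis.
Set Implicit Arguments. Unset Strict Implicit. Unset Printing Implicit Defensive.
Import Order.TTheory GRing.Theory Num.Theory.
Import numFieldNormedType.Exports.
Local Open Scope classical_set_scope.
Local Open Scope ring_scope.

(* Slice the range of f into intervals [c, c + h] with A-measurable preimages S.
   On S the function f X lies between c X - h M and c X + h M (|X| <= M), so
   by monotonicity and weak homogeneity |x(f X) - c x(X)| <= h M |x(1)| a.e. on
   S, hence |x(f X) - f x(X)| <= h (M |x(1)| + |x(X)|) a.e. on S.  Letting the
   countably many slices cover [0, oo) and h = 1/(n+1) -> 0 gives the claim. *)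

Section RealFacts.
Variable R : realType.

Lemma ler_distM_mesh (c h f X M : R) : c <= f <= c + h -> `|X| <= M ->
  `|f * X - c * X| <= h * M.
Proof.
move=> /andP[cf fch] XM; rewrite -mulrBl normrM.
apply: ler_pM => //.
by rewrite ger0_norm ?subr_ge0 // lerBlDl.
Qed.

Lemma ler_distM_approx (a b c f h M K N one : R) :
  `|a - c * b| <= h * M * one -> c <= f <= c + h -> `|one| <= K -> `|b| <= N ->
  0 <= M -> `|a - f * b| <= h * (M * K + N).
Proof.
move=> acb cfh oneK bN M0.
have h0 : 0 <= h.
  by case/andP: cfh => cf fch; rewrite -(lerD2l c) addr0 (le_trans cf).
have -> : a - f * b = (a - c * b) - (f * b - c * b) by rewrite opprB addrA subrK.
rewrite (le_trans (ler_normB _ _)) // mulrDr mulrA lerD ?ler_distM_mesh //.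
rewrite (le_trans acb) // ler_wpM2l ?mulr_ge0 //.
exact: le_trans (ler_norm _) oneK.
Qed.

Lemma nat_mesh_cover (h y : R) : 0 < h -> 0 <= y ->
  exists k : nat, k%:R * h <= y <= k%:R * h + h.
Proof.
move=> h0 y0; have /andP[lo hi] := truncn_itv (divr_ge0 y0 (ltW h0)).
exists (Num.truncn (y / h)); apply/andP; split.
  by rewrite -ler_pdivlMr.
rewrite -[X in _ + X]mul1r -mulrDl -ler_pdivrMr //.
by rewrite -natr1 in hi; exact: ltW.
Qed.

Lemma eq0_le_inv_nat (y C : R) : (forall n : nat, `|y| <= C / n.+1%:R) -> y = 0.
Proof.
move=> yC; apply/normr0_eq0/eqP; rewrite eq_le normr_ge0 andbT.
apply/ler_addgt0Pr => e e0; rewrite add0r.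
have C0 : 0 <= C by have := yC 0%N; rewrite divr1; apply: le_trans.
have /ltW := archi_boundP (divr_ge0 C0 (ltW e0)).
rewrite ler_pdivrMr // => Cb.
apply: le_trans (yC (Num.bound (C / e))) _.
rewrite ler_pdivrMr ?ltr0Sn // (le_trans Cb) //.
by rewrite mulrC ler_wpM2l ?(ltW e0) // ler_nat.
Qed.

End RealFacts.

Section LinfClosure.
Context (d : measure_display) (T : measurableType d) (R : realType).
Variables (P : probability T R) (G : set (set T)).
Hypothesis sG : sigma_algebra setT G.

Lemma measurable_wrtE (f : T -> R) :
  measurable_wrt G f <-> measurable_fun (setT : set (g_sigma_algebraType G)) f.
Proof.
have GE : <<s G >> = G by exact: sigma_algebra_id.
split => [mf _ B mB | mf B mB].
  by change (<<s G >> (setT `&` f @^-1` B)); rewrite GE setTI; exact: mf.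
have := mf measurableT B mB.
by change (<<s G >> (setT `&` f @^-1` B) -> G (f @^-1` B)); rewrite GE setTI.
Qed.

Lemma Linf_cst (c : R) : Linf P G (fun=> c).
Proof.
split; first by apply/measurable_wrtE; exact: measurable_cst.
by exists `|c|; apply: aeW.
Qed.

Lemma Linf_add f g : Linf P G f -> Linf P G g -> Linf P G (fun v => f v + g v).
Proof.
move=> [mf [M1 fM1]] [mg [M2 gM2]]; split.
  by apply/measurable_wrtE; apply: measurable_realfun.measurable_funD; exact/measurable_wrtE.
exists (M1 + M2); apply: filterS2 fM1 gM2 => w fM1 gM2.
by rewrite (le_trans (ler_normD _ _)) // lerD.
Qed.

Lemma Linf_mul f g : Linf P G f -> Linf P G g -> Linf P G (fun v => f v * g v).
Proof.
move=> [mf [M1 fM1]] [mg [M2 gM2]]; split.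
  by apply/measurable_wrtE; apply: measurable_realfun.measurable_funM; exact/measurable_wrtE.
by exists (M1 * M2); apply: filterS2 fM1 gM2 => w fM1 gM2; rewrite normrM ler_pM.
Qed.

Lemma Linf_ind A : G A -> Linf P G (ind R A).
Proof.
move=> GA; split.
  apply/measurable_wrtE.
  apply: (@measurable_realfun.measurable_indic _ (g_sigma_algebraType G)).
  by change (<<s G >> A); rewrite sigma_algebra_id.
by exists 1; apply: aeW => w; rewrite /ind indicE; case: (_ \in _); rewrite ?normr1 ?normr0.
Qed.

End LinfClosure.

Lemma Linf_subsigma d (T : measurableType d) (R : realType) (P : probability T R)
    (G H : set (set T)) (f : T -> R) :
  G `<=` H -> Linf P G f -> Linf P H f.
Proof. by move=> GH [mf bf]; split => // B mB; apply: GH; exact: mf. Qed.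

Section WeakHomogeneous.
Context (d : measure_display) (T : measurableType d) (R : realType).
Variables (P : probability T R) (sA sB : set (set T)).
Hypotheses (hB : is_sub_sigma sB) (hAB : sA `<=` sB).
Variable x : (T -> R) -> (T -> R).
Hypothesis x_lin : forall (a b : R) X Y, Linf P sB X -> Linf P sB Y ->
  {ae P, forall w, x (fun v => a * X v + b * Y v) w = a * x X w + b * x Y w}.
Hypothesis x_mono : forall X Y, Linf P sB X -> Linf P sB Y ->
  {ae P, forall w, X w <= Y w} -> {ae P, forall w, x X w <= x Y w}.
Hypothesis x_weak : forall (A : set T) X, sA A -> Linf P sB X ->
  {ae P, forall w, x (fun v => ind R A v * X v) w = ind R A w * x X w}.

Let sBs : sigma_algebra setT sB := hB.1.

Lemma x_mono_on (A : set T) X Y : sA A -> Linf P sB X -> Linf P sB Y ->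
  {ae P, forall w, A w -> X w <= Y w} -> {ae P, forall w, A w -> x X w <= x Y w}.
Proof.
move=> sAA LX LY XY.
have LA := Linf_ind P sBs (hAB sAA).
have XYA : {ae P, forall w, x (fun v => ind R A v * X v) w <= x (fun v => ind R A v * Y v) w}.
  apply: x_mono; [exact: Linf_mul | exact: Linf_mul |].
  apply: filterS XY => w XYw; rewrite /ind indicE.
  by case: (boolP (w \in A)) => [/set_mem /XYw|]; rewrite ?mul1r ?mul0r.
apply: filterS (filterI XYA (filterI (x_weak sAA LX) (x_weak sAA LY))).
by move=> w [+ [WX WY]] Aw; rewrite WX WY /ind indicE mem_set // !mul1r.
Qed.

Lemma x_mul_slice (f X : T -> R) (c h M : R) :
  Linf P sA f -> Linf P sB X -> {ae P, forall w, `|X w| <= M} ->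
  {ae P, forall w, c <= f w <= c + h ->
    `|x (fun v => f v * X v) w - c * x X w| <= h * M * x (fun=> 1) w}.
Proof.
move=> Lf LX XM; have [mfA _] := Lf.
have LfX := Linf_mul sBs (Linf_subsigma hAB Lf) LX.
have L1 := Linf_cst P sBs 1.
have Lshift e : Linf P sB (fun v => c * X v + e * 1).
  by apply: Linf_add => //; apply: Linf_mul => //; exact: Linf_cst.
pose S := f @^-1` [set` `[c, c + h]%R].
have sAS : sA S by apply: mfA; exact: measurable_itv.
have near_cX : {ae P, forall w, S w ->
    c * X w - h * M <= f w * X w <= c * X w + h * M}.
  apply: filterS XM => w XMw Sw; rewrite -ler_distl; apply: ler_distM_mesh XMw.
  by move: Sw; rewrite /S /= in_itv.
have up : {ae P, forall w, S w ->
    x (fun v => f v * X v) w <= x (fun v => c * X v + (h * M) * 1) w}.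
  apply: x_mono_on => //; apply: filterS near_cX => w cXw /cXw /andP[_].
  by rewrite mulr1.
have lo : {ae P, forall w, S w ->
    x (fun v => c * X v + (- (h * M)) * 1) w <= x (fun v => f v * X v) w}.
  apply: x_mono_on => //; apply: filterS near_cX => w cXw /cXw /andP[+ _].
  by rewrite mulr1.
apply: filterS (filterI up (filterI lo (filterI (x_lin c (h * M) LX L1)
  (x_lin c (- (h * M)) LX L1)))).
move=> w [upw [low [linu linl]]] Sw; have {}Sw : S w by rewrite /S /= in_itv.
move: (upw Sw) (low Sw); rewrite linu linl mulNr => {}upw {}low.
by rewrite ler_distl upw low.
Qed.

End WeakHomogeneous.

Theorem lemma3p7 (d : measure_display) (T : measurableType d) (R : realType)
  (P : probability T R) (cP : measure_is_complete P)
  (sA sB : set (set T))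
  (hA : is_sub_sigma sA) (hB : is_sub_sigma sB) (hAB : sA `<=` sB)
  (x : (T -> R) -> (T -> R))
  (* x : L_infty(B) -> L_infty(A) *)
  (x_range : forall X, Linf P sB X -> Linf P sA (x X))
  (* linear *)
  (x_lin : forall (a b : R) X Y, Linf P sB X -> Linf P sB Y ->
     {ae P, forall w, x (fun v => a * X v + b * Y v) w = a * x X w + b * x Y w})
  (* monotone (on classes: a.s. order) *)
  (x_mono : forall X Y, Linf P sB X -> Linf P sB Y ->
     {ae P, forall w, X w <= Y w} -> {ae P, forall w, x X w <= x Y w})
  (* weak A-homogeneous *)
  (x_weak : forall (A : set T) X, sA A -> Linf P sB X ->
     {ae P, forall w, x (fun v => @ind _ _ R A v * X v) w = @ind _ _ R A w * x X w})
  (* continuous from above *)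
  (x_cont : forall (Xn : nat -> T -> R) X,
     (forall n, Linf P sB (Xn n)) -> Linf P sB X ->
     {ae P, forall w, forall n, Xn n.+1 w <= Xn n w} ->
     {ae P, forall w, Xn n w @[n --> \oo] --> X w} ->
     {ae P, forall w, (forall n, x (Xn n.+1) w <= x (Xn n) w) /\
                      x (Xn n) w @[n --> \oo] --> x X w}) :
  (* A-homogeneous *)
  forall (f X : T -> R), Linf_pos P sA f -> Linf P sB X ->
    {ae P, forall w, x (fun v => f v * X v) w = f w * x X w}.
Proof.
move=> f X [Lf f0] LX.
have [_ [K x1K]] := x_range _ (Linf_cst P hB.1 1).
have [_ [N xXN]] := x_range _ LX.
have [_ [M XM]] := LX.
have slices := ae_foralln (fun n => ae_foralln (fun k =>
  x_mul_slice hB hAB x_lin x_mono x_weak (k%:R * n.+1%:R^-1) n.+1%:R^-1 Lf LX XM)).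
apply: filterS (filterI slices (filterI f0 (filterI x1K (filterI xXN XM)))).
move=> w [slicew [f0w [x1Kw [xXNw XMw]]]]; apply: subr0_eq.
apply: (@eq0_le_inv_nat _ _ (M * K + N)) => n; rewrite [_ / _]mulrC.
have [k fk] : exists k : nat, k%:R / n.+1%:R <= f w <= k%:R / n.+1%:R + n.+1%:R^-1.
  by apply: nat_mesh_cover f0w; rewrite invr_gt0.
exact: ler_distM_approx (slicew n k fk) fk x1Kw xXNw (le_trans (normr_ge0 _) XMw).
Qed.
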